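(* Let $\Gamma\Rightarrow\Delta$ be a sequent provable in $\mathsf{Grz}_\infty$. Then for every finite set of formulas $\Lambda$, $\mathsf{Grz_{Seq}}\vdash\Lambda^\ast,\Gamma\Rightarrow\Delta$, where $\Lambda^\ast=\{\Box(A\to\Box A)\mid A\in\Lambda\}$.
   Context: Formulas are built from $\bot$ and atomic propositions using $\to$ and $\Box$. A sequent is $\Gamma\Rightarrow\Delta$ with $\Gamma,\Delta$ finite multisets of formulas; $\Box\Pi$ denotes the multiset $\{\Box B:B\in\Pi\}$. Common rules: $(\to_L)$ from $\Gamma,B\Rightarrow\Delta$ and $\Gamma\Rightarrow A,\Delta$ infer $\Gamma,A\to B\Rightarrow\Delta$; $(\to_R)$ from $\Gamma,A\Rightarrow B,\Delta$ infer $\Gamma\Rightarrow A\to B,\Delta$; $(\mathsf{refl})$ from $\Gamma,B,\Box B\Rightarrow\Delta$ infer $\Gamma,\Box B\Rightarrow\Delta$. The finite-proof calculus $\mathsf{Grz_{Seq}}$ has initial sequents $\Gamma,A\Rightarrow A,\Delta$ (any $A$) and $\Gamma,\bot\Rightarrow\Delta$, the rules $(\to_L),(\to_R),(\mathsf{refl})$ and $(\Box_{\mathsf{Grz}})$: from $\Box\Pi,\Box(A\to\Box A)\Rightarrow A$ infer $\Gamma,\Box\Pi\Rightarrow\Box A,\Delta$. The calculus $\mathsf{Grz}_\infty$ has initial sequents $\Gamma,p\Rightarrow p,\Delta$ ($p$ atomic) and $\Gamma,\bot\Rightarrow\Delta$, the rules $(\to_L),(\to_R),(\mathsf{refl})$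 and $(\Box)$: from left premise $\Gamma,\Box\Pi\Rightarrow A,\Delta$ and right premise $\Box\Pi\Rightarrow A$ infer $\Gamma,\Box\Pi\Rightarrow\Box A,\Delta$. Proofs in $\mathsf{Grz}_\infty$ are $\infty$-proofs: possibly infinite trees of sequents built by these rules, with leaves labelled by initial sequents, in which every infinite branch passes through a right premise of $(\Box)$ infinitely often; a sequent is provable if it labels the root of an $\infty$-proof. *)

From Stdlib Require Import List Permutation.
Import ListNotations.

Inductive form : Type :=
| Bot : form
| Var : nat -> form
| Imp : form -> form -> form
| Box : form -> form.

Definition boxes (Pi : list form) : list form := map Box Pi.

Definition seq_eq (S1 S2 : list form * list form) : Prop :=
  Permutation (fst S1) (fst S2) /\ Permutation (snd S1) (snd S2).

(* ---------- The finite calculus Grz_Seq ----------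
   Conclusions are stated modulo permutation, so derivability is a property
   of multiset sequents. *)
Inductive GrzSeq : list form -> list form -> Prop :=
| gs_init : forall G D A Gm Dl,
    Permutation G (A :: Gm) -> Permutation D (A :: Dl) -> GrzSeq G D
| gs_bot : forall G D Gm,
    Permutation G (Bot :: Gm) -> GrzSeq G D
| gs_impL : forall G D Gm A B,
    Permutation G (Imp A B :: Gm) ->
    GrzSeq (B :: Gm) D -> GrzSeq Gm (A :: D) -> GrzSeq G D
| gs_impR : forall G D Dl A B,
    Permutation D (Imp A B :: Dl) ->
    GrzSeq (A :: G) (B :: Dl) -> GrzSeq G D
| gs_refl : forall G D Gm B,
    Permutation G (Box B :: Gm) ->
    GrzSeq (B :: Box B :: Gm) D -> GrzSeq G D
| gs_boxGrz : forall G D Gm Dl Pi A,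
    Permutation G (Gm ++ boxes Pi) -> Permutation D (Box A :: Dl) ->
    GrzSeq (boxes Pi ++ [Box (Imp A (Box A))]) [A] -> GrzSeq G D.

Inductive rule_tag : Type :=
| RInit | RBot | RImpL | RImpR | RRefl | RBox.

(* Possibly infinite, finitely branching trees whose nodes are labelled by a
   sequent and the rule applied there; the children are the premises, in order
   (for (->_L): first Gamma,B => Delta, then Gamma => A,Delta; for (Box):
   index 0 = left premise, index 1 = right premise). *)
CoInductive ptree : Type :=
| Node : list form -> list form -> rule_tag -> list ptree -> ptree.

Definition pt_seq (t : ptree) : list form * list form :=
  match t with Node G D _ _ => (G, D) end.
Definition pt_rule (t : ptree) : rule_tag :=
  match t with Node _ _ r _ => r end.
Definition pt_kids (t : ptree) : list ptree :=
  match t with Node _ _ _ ks => ks end.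

Fixpoint subtree (t : ptree) (p : list nat) : option ptree :=
  match p with
  | [] => Some t
  | i :: p' =>
      match nth_error (pt_kids t) i with
      | Some t' => subtree t' p'
      | None => None
      end
  end.

Definition locally_correct (t : ptree) : Prop :=
  let '(G, D) := pt_seq t in
  match pt_rule t, pt_kids t with
  | RInit, [] => exists p Gm Dl,
      Permutation G (Var p :: Gm) /\ Permutation D (Var p :: Dl)
  | RBot, [] => exists Gm, Permutation G (Bot :: Gm)
  | RImpL, [k1; k2] => exists Gm A B,
      Permutation G (Imp A B :: Gm) /\
      seq_eq (pt_seq k1) (B :: Gm, D) /\ seq_eq (pt_seq k2) (Gm, A :: D)
  | RImpR, [k] => exists Dl A B,
      Permutation D (Imp A B :: Dl) /\ seq_eq (pt_seq k) (A :: G, B :: Dl)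
  | RRefl, [k] => exists Gm B,
      Permutation G (Box B :: Gm) /\ seq_eq (pt_seq k) (B :: Box B :: Gm, D)
  | RBox, [k1; k2] => exists Gm Dl Pi A,
      Permutation G (Gm ++ boxes Pi) /\ Permutation D (Box A :: Dl) /\
      seq_eq (pt_seq k1) (Gm ++ boxes Pi, A :: Dl) /\
      seq_eq (pt_seq k2) (boxes Pi, [A])
  | _, _ => False
  end.

Definition prefix (d : nat -> nat) (n : nat) : list nat := map d (seq 0 n).

Definition infinite_branch (t : ptree) (d : nat -> nat) : Prop :=
  forall n, subtree t (prefix d n) <> None.

(* Every infinite branch passes through a right premise of (Box) infinitely
   often: infinitely many steps go from a (Box)-node to its child of index 1. *)
Definition fair (t : ptree) : Prop :=
  forall d, infinite_branch t d ->
    forall N, exists n, N <= n /\ d n = 1 /\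
      exists s, subtree t (prefix d n) = Some s /\ pt_rule s = RBox.

Definition inf_proof (t : ptree) : Prop :=
  (forall p s, subtree t p = Some s -> locally_correct s) /\ fair t.

Definition GrzInf_provable (G D : list form) : Prop :=
  exists t, inf_proof t /\ seq_eq (pt_seq t) (G, D).

Definition star (L : list form) : list form :=
  map (fun A => Box (Imp A (Box A))) L.

(* Fix the subformula closure S of the root sequent and induct on the number of
   formulas of S outside L.  For a fixed L, the infinite proof is translated
   bottom-up into Grz_Seq with star L added to every antecedent.  All rules are
   simulated directly except (Box) with principal formula Box A.  If A is in L,
   the left premise suffices: reflexivity on Box (A -> Box A) followed by (->_L)
   turns  star L, G => A, D  into  star L, G => Box A, D.  Otherwise the right
   premise is translated with A :: L, which leaves fewer formulas of S outside,
   and (Box_Grz) applies to Pi extended by the formulas A' -> Box A' with A' in L.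
   The translation is well founded because, by fairness, every path of the proof
   that avoids right premises of (Box) is finite. *)

From Stdlib Require Import List Permutation Morphisms Wf_nat Lia Classical ClassicalEpsilon.
Import ListNotations.

Lemma GrzSeq_perm G D G' D' :
  GrzSeq G D -> Permutation G G' -> Permutation D D' -> GrzSeq G' D'.
Proof.
  intros HGD; revert G' D'.
  induction HGD; intros G' D' HG HD.
  - apply gs_init with A Gm Dl; [rewrite <- HG | rewrite <- HD]; assumption.
  - apply gs_bot with Gm; rewrite <- HG; assumption.
  - apply gs_impL with Gm A B; [rewrite <- HG | apply IHHGD1 | apply IHHGD2]; auto.
  - apply gs_impR with Dl A B; [rewrite <- HD | apply IHHGD]; auto.
  - apply gs_refl with Gm B; [rewrite <- HG | apply IHHGD]; auto.
  - apply gs_boxGrz with Gm Dl Pi A; [rewrite <- HG | rewrite <- HD |]; assumption.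
Qed.

#[export] Instance GrzSeq_Permutation :
  Proper (@Permutation form ==> @Permutation form ==> iff) GrzSeq.
Proof.
  intros G G' HG D D' HD; split; intros H; eapply GrzSeq_perm; eauto; now symmetry.
Qed.

Lemma GrzSeq_weakenR G D Y : GrzSeq G D -> GrzSeq G (Y :: D).
Proof.
  intros HGD; revert Y; induction HGD; intros Y.
  - apply gs_init with A Gm (Y :: Dl); [assumption | rewrite H0; apply perm_swap].
  - now apply gs_bot with Gm.
  - apply gs_impL with Gm A B; [assumption | apply IHHGD1 |].
    rewrite perm_swap; apply IHHGD2.
  - apply gs_impR with (Y :: Dl) A B; [rewrite H; apply perm_swap |].
    rewrite perm_swap; apply IHHGD.
  - now apply gs_refl with Gm B.
  - apply gs_boxGrz with Gm (Y :: Dl) Pi A; [assumption | rewrite H0; apply perm_swap |].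
    assumption.
Qed.

Lemma GrzSeq_box_from_grz_hyp G D A :
  In (Box (Imp A (Box A))) G -> GrzSeq G (A :: D) -> GrzSeq G (Box A :: D).
Proof.
  intros HC HA; destruct (in_split _ _ HC) as (G1 & G2 & ->).
  rewrite <- Permutation_middle in HA |- *.
  apply gs_refl with (G1 ++ G2) (Imp A (Box A)); [reflexivity |].
  apply gs_impL with (Box (Imp A (Box A)) :: G1 ++ G2) A (Box A); [reflexivity | |].
  - apply gs_init with (Box A) (Box (Imp A (Box A)) :: G1 ++ G2) D; reflexivity.
  - rewrite perm_swap; apply GrzSeq_weakenR, HA.
Qed.

Lemma star_boxes L : star L = boxes (map (fun A => Imp A (Box A)) L).
Proof. unfold star, boxes; now rewrite map_map. Qed.

Lemma GrzSeq_boxGrz_star L G Pi A D :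
  GrzSeq (star (A :: L) ++ boxes Pi) [A] -> GrzSeq (star L ++ G ++ boxes Pi) (Box A :: D).
Proof.
  intros HA.
  apply gs_boxGrz with G D (map (fun A => Imp A (Box A)) L ++ Pi) A; [| reflexivity |].
  - unfold boxes at 2; rewrite map_app; fold (boxes Pi); rewrite <- star_boxes.
    rewrite app_assoc, (Permutation_app_comm (star L) G); now rewrite app_assoc.
  - unfold boxes at 1; rewrite map_app; fold (boxes Pi); rewrite <- star_boxes.
    rewrite <- app_assoc, <- Permutation_cons_append, <- Permutation_middle; exact HA.
Qed.

Fixpoint subformulas (A : form) : list form :=
  A :: match A with
       | Imp B C => subformulas B ++ subformulas C
       | Box B => subformulas B
       | _ => []
       end.

Lemma subformulas_refl A : In A (subformulas A).
Proof. destruct A; now left. Qed.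

Lemma subformulas_trans A B C :
  In A (subformulas B) -> In B (subformulas C) -> In A (subformulas C).
Proof.
  intros HAB; induction C as [| | C1 IH1 C2 IH2 | C1 IH]; cbn;
    intros [<- | HBC]; auto; try contradiction.
  apply in_app_or in HBC as [|]; right; apply in_or_app; auto.
Qed.

Definition subformula_closed (P : form -> Prop) : Prop :=
  (forall A B, P (Imp A B) -> P A /\ P B) /\ (forall A, P (Box A) -> P A).

Lemma subformula_closed_flat_map l :
  subformula_closed (fun A => In A (flat_map subformulas l)).
Proof.
  assert (Hsub : forall A B, In A (subformulas B) ->
            In B (flat_map subformulas l) -> In A (flat_map subformulas l)).
  { intros A B HAB [C [HC HBC]]%in_flat_map.
    apply in_flat_map; exists C; eauto using subformulas_trans. }
  split; [intros A B H; split | intros A H]; refine (Hsub _ _ _ H); cbn; right;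
    rewrite ?in_app_iff; auto using subformulas_refl.
Qed.

Definition node_forms (s : ptree) : list form := fst (pt_seq s) ++ snd (pt_seq s).

Lemma seq_eq_Forall P k G D :
  seq_eq (pt_seq k) (G, D) -> Forall P (G ++ D) -> Forall P (node_forms k).
Proof. unfold node_forms; intros [-> ->]; auto. Qed.

Lemma premise_forms_Forall P s i k :
  subformula_closed P -> locally_correct s -> Forall P (node_forms s) ->
  nth_error (pt_kids s) i = Some k -> Forall P (node_forms k).
Proof.
  intros [HImp HBox]; destruct s as [G D r ks]; unfold locally_correct, node_forms; cbn.
  intros Hlc HP Hk.
  apply nth_error_In in Hk.
  destruct r; destruct ks as [| k1 [| k2 [| ? ?]]]; try contradiction;
    cbn in Hk; repeat destruct Hk as [<- | Hk]; try contradiction.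
  all: decompose [ex and] Hlc; eapply seq_eq_Forall; [eassumption |].
  all: repeat match goal with
         | H : Permutation ?X _ |- _ => is_var X; rewrite H in HP; clear H
         end.
  all: rewrite ?Forall_app, ?Forall_cons_iff in *; intuition.
  all: match goal with
       | H : _ (Imp _ _) |- _ => apply HImp in H; tauto
       | H : _ (Box _) |- _ => apply HBox in H; tauto
       end.
Qed.

Definition form_eq_dec (A B : form) : {A = B} + {A <> B}.
Proof. decide equality; apply PeanoNat.Nat.eq_dec. Defined.

Lemma subtree_snoc t p i :
  subtree t (p ++ [i]) =
  match subtree t p with Some s => nth_error (pt_kids s) i | None => None end.
Proof.
  revert t; induction p as [| j p IH]; intros t; cbn.
  - now destruct (nth_error (pt_kids t) i).
  - destruct (nth_error (pt_kids t) j); auto.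
Qed.

Lemma prefix_S d n : prefix d (S n) = prefix d n ++ [d n].
Proof. unfold prefix; now rewrite seq_S, map_app. Qed.

Lemma inf_proof_premise s i k :
  inf_proof s -> nth_error (pt_kids s) i = Some k -> inf_proof k.
Proof.
  intros [Hlc Hfair] Hk; split.
  - intros p s' Hp; apply (Hlc (i :: p)); cbn; now rewrite Hk.
  - intros d Hd N.
    set (d' n := match n with 0 => i | S n => d n end).
    assert (Hpre : forall n, subtree s (prefix d' (S n)) = subtree k (prefix d n)).
    { intros n; unfold prefix; cbn [seq map].
      rewrite <- seq_shift, map_map; cbn; now rewrite Hk. }
    destruct (Hfair d') with (S N) as ([| n] & HNn & Hdn & s' & Hs' & Hbox); [| lia |].
    + intros [| n]; [discriminate | rewrite Hpre; apply Hd].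
    + exists n; rewrite <- Hpre; repeat split; eauto with arith.
Qed.

Definition non_box_right_premise (k s : ptree) : Prop :=
  exists i, nth_error (pt_kids s) i = Some k /\ ~ (pt_rule s = RBox /\ i = 1).

Lemma fair_Acc t : fair t -> Acc non_box_right_premise t.
Proof.
  intros Hfair; apply NNPP; intros Hnacc.
  assert (Hstep : forall s, exists ik : nat * ptree, ~ Acc non_box_right_premise s ->
    nth_error (pt_kids s) (fst ik) = Some (snd ik) /\
    ~ (pt_rule s = RBox /\ fst ik = 1) /\ ~ Acc non_box_right_premise (snd ik)).
  { intros s; destruct (classic (Acc non_box_right_premise s)) as [Hs | Hs].
    - now exists (0, s).
    - apply NNPP; intros Hno; apply Hs; constructor; intros k [i [Hk Hi]].
      apply NNPP; intros Hk'; apply Hno; now exists (i, k). }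
  destruct (choice _ Hstep) as [next Hnext].
  set (node n := Nat.iter n (fun s => snd (next s)) t).
  set (d n := fst (next (node n))).
  assert (Hbranch : forall n,
    subtree t (prefix d n) = Some (node n) /\ ~ Acc non_box_right_premise (node n)).
  { induction n as [| n [Hsub Hbad]]; [split; [reflexivity | exact Hnacc] |].
    destruct (Hnext _ Hbad) as (Hk & _ & Hbad').
    rewrite prefix_S, subtree_snoc, Hsub; split; [exact Hk | exact Hbad']. }
  destruct (Hfair d) with 0 as (n & _ & Hdn & s & Hs & Hbox).
  - intros n; now rewrite (proj1 (Hbranch n)).
  - destruct (Hbranch n) as [Hsub Hbad]; rewrite Hs in Hsub; injection Hsub as ->.
    destruct (Hnext _ Hbad) as (_ & Hnot & _); now apply Hnot.
Qed.

Definition star_provable (L : list form) (s : ptree) : Prop :=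
  GrzSeq (star L ++ fst (pt_seq s)) (snd (pt_seq s)).

Lemma star_provable_seq_eq L k G D :
  seq_eq (pt_seq k) (G, D) -> star_provable L k -> GrzSeq (star L ++ G) D.
Proof. unfold star_provable; now intros [-> ->]. Qed.

Lemma star_provable_step L s :
  locally_correct s ->
  (forall k, non_box_right_premise k s -> star_provable L k) ->
  (forall k A, pt_rule s = RBox -> nth_error (pt_kids s) 1 = Some k ->
     In A (snd (pt_seq k)) -> ~ In A L -> star_provable (A :: L) k) ->
  star_provable L s.
Proof.
  destruct s as [G D r ks]; unfold locally_correct; cbn [pt_seq pt_rule pt_kids].
  intros Hlc Hprem Hright; change (GrzSeq (star L ++ G) D).
  assert (Hfst : forall k, nth_error ks 0 = Some k -> star_provable L k).
  { intros k Hk; apply Hprem; exists 0; split; [exact Hk | now intros [_ ?]]. }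
  assert (Hsnd : r <> RBox -> forall k, nth_error ks 1 = Some k -> star_provable L k).
  { intros Hr k Hk; apply Hprem; exists 1; split; [exact Hk | now intros [? _]]. }
  destruct r; destruct ks as [| k1 [| k2 [| ? ?]]]; try contradiction.
  - destruct Hlc as (p & Gm & Dl & HG & HD); rewrite HG, HD, <- Permutation_middle.
    now apply gs_init with (Var p) (star L ++ Gm) Dl.
  - destruct Hlc as (Gm & HG); rewrite HG, <- Permutation_middle.
    now apply gs_bot with (star L ++ Gm).
  - destruct Hlc as (Gm & A & B & HG & H1 & H2); rewrite HG, <- Permutation_middle.
    apply gs_impL with (star L ++ Gm) A B; [reflexivity | |].
    + rewrite Permutation_middle; eapply star_provable_seq_eq; eauto.
    + eapply star_provable_seq_eq; [exact H2 | now apply Hsnd].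
  - destruct Hlc as (Dl & A & B & HD & H1); rewrite HD.
    apply gs_impR with Dl A B; [reflexivity |].
    rewrite Permutation_middle; eapply star_provable_seq_eq; eauto.
  - destruct Hlc as (Gm & B & HG & H1); rewrite HG, <- Permutation_middle.
    apply gs_refl with (star L ++ Gm) B; [reflexivity |].
    rewrite 2!Permutation_middle; eapply star_provable_seq_eq; eauto.
  - destruct Hlc as (Gm & Dl & Pi & A & HG & HD & H1 & H2).
    destruct (in_dec form_eq_dec A L) as [HA | HA]; rewrite HG, HD.
    + apply GrzSeq_box_from_grz_hyp; [apply in_or_app; left;
        exact (in_map (fun B => Box (Imp B (Box B))) L A HA) |].
      eapply star_provable_seq_eq; eauto.
    + apply GrzSeq_boxGrz_star; eapply star_provable_seq_eq; [exact H2 |].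
      apply Hright; auto.
      destruct H2 as [_ H2]; cbn in H2; rewrite H2; now left.
Qed.

Lemma star_provable_inf_proof S :
  subformula_closed (fun A => In A S) ->
  forall U L, (forall A, In A S -> In A U \/ In A L) ->
  forall t, inf_proof t -> Forall (fun A => In A S) (node_forms t) -> star_provable L t.
Proof.
  intros HS U; induction U as [U IHU] using (induction_ltof1 _ (@length form)).
  intros L HUL t Ht HtS; pose proof (fair_Acc t (proj2 Ht)) as Hacc; revert Ht HtS.
  induction Hacc as [s _ IHs]; intros Hs HsS.
  assert (Hlc : locally_correct s) by exact (proj1 Hs [] s eq_refl).
  apply star_provable_step; [exact Hlc | |].
  - intros k Hk; apply IHs; [exact Hk | |]; destruct Hk as [i [Hk _]].
    + exact (inf_proof_premise s i k Hs Hk).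
    + exact (premise_forms_Forall _ s i k HS Hlc HsS Hk).
  - intros k A _ Hk HA HAL.
    assert (HkS := premise_forms_Forall _ s 1 k HS Hlc HsS Hk).
    assert (HAU : In A U).
    { rewrite Forall_forall in HkS.
      destruct (HUL A) as [? | ?]; [| assumption | contradiction].
      apply HkS, in_or_app; now right. }
    apply (IHU (remove form_eq_dec A U)); [now apply remove_length_lt | | |].
    + intros B HB; destruct (form_eq_dec B A) as [-> | HBA]; [now right; left |].
      destruct (HUL B HB); [left; now apply in_in_remove | now right; right].
    + exact (inf_proof_premise s 1 k Hs Hk).
    + exact HkS.
Qed.

Theorem lemma3p5 (G D : list form) :
  GrzInf_provable G D ->
  forall L : list form, NoDup L -> GrzSeq (star L ++ G) D.
Proof.
  (* Repetitions in L are harmless. *)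
  intros [t [Ht [HG HD]]] L _.
  set (S := flat_map subformulas (node_forms t)).
  assert (Hroot : Forall (fun A => In A S) (node_forms t)).
  { apply Forall_forall; intros A HA; apply in_flat_map; eauto using subformulas_refl. }
  pose proof (star_provable_inf_proof S (subformula_closed_flat_map _) S L
                (fun A HA => or_introl HA) t Ht Hroot) as Hstar.
  unfold star_provable in Hstar; cbn in HG, HD; now rewrite HG, HD in Hstar.
Qed.
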